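(* Let $R=k[x_1,\ldots,x_n]$ and let $(h_0,h_1,\ldots,h_s)$ be the $h$-vector of a graded Artinian level algebra $A=R/I$ with socle degree $s$. Suppose that $h_{d-1}>h_d$ for some $d\geq r_1(A)$. Then (a) $h_{d-1}>h_d>\cdots>h_{s-1}>h_s>0$, and (b) $h_{t-1}-h_t\leq (n-1)(h_t-h_{t+1})$ for all $d\le t\le s$ (where $h_{s+1}=0$).
   Context: $k$ is an infinite field of characteristic $0$. $h_i=\dim_k A_i$, and $s$ is the largest degree with $A_s\ne0$ (the socle degree). The socle of $A$ is $\{a\in A: a\mathfrak m=0\}$ with $\mathfrak m$ the maximal homogeneous ideal; $A$ is level if its socle is concentrated in a single degree. The reduction number $r_1(A)=\min\{\ell:(R/(I+(L)))_{\ell+1}=0\}$ for a general linear form $L$ (equivalently $\min\{\ell: x_{n-1}^{\ell+1}\in\mathrm{Gin}(I)\}$, $\mathrm{Gin}$ taken with respect to degree reverse lexicographic order). *)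

From HB Require Import structures.
From mathcomp Require Import all_boot all_order all_algebra.
From mathcomp Require Import mpoly.

Set Implicit Arguments.
Unset Strict Implicit.
Unset Printing Implicit Defensive.

Import Order.TTheory GRing.Theory.
Local Open Scope ring_scope.

Section Graded.
Variables (k : fieldType) (n : nat).
Implicit Types (I : pred {mpoly k[n]}) (p f g q L : {mpoly k[n]}).

Definition hcomp (d : nat) p : {mpoly k[n]} :=
  \sum_(m <- msupp p | mdeg m == d) p@_m *: 'X_[m].

Definition homog_ideal I : Prop :=
  [/\ 0 \in I,
      (forall f g, f \in I -> g \in I -> f + g \in I),
      (forall f g, g \in I -> f * g \in I) &
      (forall f d, f \in I -> hcomp d f \in I)].

Definition indep_mod I m (t : m.-tuple {mpoly k[n]}) : Prop :=
  forall c : 'I_m -> k, \sum_(i < m) c i *: tnth t i \in I -> forall i, c i = 0.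

(* hdim I i h  :<=>  dim_k (R/I)_i = h, i.e. h is the maximal number of
   degree-i homogeneous forms that are linearly independent modulo I. *)
Definition hdim I (i h : nat) : Prop :=
  (exists t : h.-tuple {mpoly k[n]},
      (forall j, tnth t j \is i.-homog) /\ indep_mod I t) /\
  (forall m (t : m.-tuple {mpoly k[n]}),
      (forall j, tnth t j \is i.-homog) -> indep_mod I t -> (m <= h)%N).

(* A = R/I is level with socle degree s: the socle
   {a in A | a * m = 0} is contained in A_s, i.e. for every f with
   x_j f in I for all j, all homogeneous components of f of degree
   different from s lie in I. *)
Definition level_socle I (s : nat) : Prop :=
  forall f, (forall j : 'I_n, 'X_j * f \in I) ->
    forall d, d != s -> hcomp d f \in I.

(* (R/(I+(L)))_e = 0 *)
Definition quot_lin_vanish I L (e : nat) : Prop :=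
  forall f, f \is e.-homog -> exists g q, g \in I /\ f = g + L * q.

Definition linform (c : 'I_n -> k) : {mpoly k[n]} := \sum_(i < n) c i *: 'X_i.

Definition red_num_of I L (l : nat) : Prop :=
  quot_lin_vanish I L l.+1 /\ forall l', (l' < l)%N -> ~ quot_lin_vanish I L l'.+1.

(* r_1(A) = r : for a general linear form L (i.e. all L = sum c_i x_i with
   coefficient vector c outside the zero set of some nonzero polynomial P,
   a nonempty Zariski-open set), min{l : (R/(I+(L)))_(l+1) = 0} = r. *)
Definition is_r1 I (r : nat) : Prop :=
  exists P : {mpoly k[n]}, P != 0 /\
    forall c : 'I_n -> k, P.@[c] != 0 ->
      red_num_of I (linform c) r.

End Graded.

From HB Require Import structures.
From mathcomp Require Import all_boot all_order all_algebra.
From mathcomp Require Import mpoly.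
From mathcomp Require Import zify.
From Stdlib Require Import ClassicalEpsilon Classical.

(* Fix a linear form L with all coefficients nonzero at which the polynomial
   witnessing r_1(A) does not vanish (k is infinite), and let kappa_j be the
   dimension of the kernel of multiplication by L : A_j -> A_(j+1).  Always
   kappa_j >= h_j - h_(j+1), with equality for j >= r_1(A) since then
   L A_j = A_(j+1).  For j < s levelness gives two facts: a nonzero u in the
   kernel is not in the socle, so some x_i u is a nonzero kernel element of
   degree j+1, whence kappa_j > 0 implies kappa_(j+1) > 0; and for a fixed i0
   the n-1 maps x_i, i <> i0, from the kernel in degree j to the kernel in
   degree j+1 are jointly injective (a common zero u also has x_i0 u = 0
   because L u = 0), whence kappa_j <= (n-1) kappa_(j+1).  Starting from
   kappa_(d-1) >= h_(d-1) - h_d > 0 this gives (a) and (b). *)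

Import Order.TTheory GRing.Theory.
Local Open Scope ring_scope.

Section HomogIdeal.
Context {k : fieldType} {n : nat} {I : pred {mpoly k[n]}}.
Hypothesis hI : homog_ideal I.
Implicit Types (f g : {mpoly k[n]}).

Lemma ideal0 : 0 \in I.
Proof. by case: hI. Qed.

Lemma idealD {f g} : f \in I -> g \in I -> f + g \in I.
Proof. by case: hI => _ + _ _; apply. Qed.

Lemma idealMl {f g} : g \in I -> f * g \in I.
Proof. by case: hI => _ _ + _; apply. Qed.

Lemma idealZ {a : k} {g} : g \in I -> a *: g \in I.
Proof. by rewrite -mul_mpolyC; apply: idealMl. Qed.

Lemma idealB {f g} : f \in I -> g \in I -> f - g \in I.
Proof. by move=> fI gI; rewrite -scaleN1r; apply/idealD/idealZ. Qed.

Lemma ideal_sum (J : Type) (r : seq J) (P : pred J) (F : J -> {mpoly k[n]}) :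
  (forall i, P i -> F i \in I) -> \sum_(i <- r | P i) F i \in I.
Proof. by move=> FI; elim/big_rec: _ => [|i x /FI]; [apply: ideal0 | apply: idealD]. Qed.

Lemma ideal_hcomp {d f} : f \in I -> hcomp d f \in I.
Proof. by case: hI => _ _ _; apply. Qed.

Lemma indep_mod_cons m (t : m.-tuple {mpoly k[n]}) f :
  indep_mod I t -> (forall c : 'I_m -> k, f - \sum_a c a *: tnth t a \notin I) ->
  indep_mod I [tuple of f :: t].
Proof.
move=> t_indep f_nspan c; rewrite big_ord_recl tnth0.
under eq_bigr do rewrite tnthS.
move=> cI; have c0 : c ord0 = 0.
  apply/eqP; apply: contraNT (f_nspan (fun a => - (c (lift ord0 a) / c ord0))).
  move=> c0_neq0; have := idealZ (a := (c ord0)^-1) cI.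
  rewrite scalerDr scalerA mulVf // scale1r scaler_sumr -sumrN.
  congr (_ + _ \in I); apply: eq_bigr => a _.
  by rewrite scaleNr opprK scalerA mulrC.
move: cI; rewrite c0 scale0r add0r => /t_indep c_eq0 i.
by case: (unliftP ord0 i) => [a ->|->].
Qed.

End HomogIdeal.

Lemma monomial_splitU {n} (m : 'X_{1..n}) e : mdeg m = e.+1 ->
  exists i m', m = (U_(i) + m')%MM /\ mdeg m' = e.
Proof.
move=> deg_m; have m_neq0 : m != 0%MM by rewrite -mdeg_eq0 deg_m.
have /existsP [i mi_gt0] : [exists i, 0 < m i]%N.
  apply: contraNT m_neq0 => /existsPn no_i; apply/eqP/mnmP => i.
  by rewrite mnm0E; apply/eqP; rewrite -leqn0 leqNgt no_i.
have Ui_le : (U_(i) <= m)%MM.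
  by apply/mnm_lepP => j; rewrite mnm1E; case: eqP => // <-.
exists i, (m - U_(i))%MM; rewrite addmC submK //; split=> //.
by move: deg_m; rewrite -{1}(submK Ui_le) mdegD mdeg1 addn1 => -[].
Qed.

Section HomogComponents.
Context {k : fieldType} {n : nat}.
Implicit Types (f g q : {mpoly k[n]}).

Lemma hcompE d f : hcomp d f = pihomog mdeg d f.
Proof. by []. Qed.

Lemma dhomogXU (i : 'I_n) : ('X_i : {mpoly k[n]}) \is 1.-homog.
Proof. by rewrite dhomogX /= mdeg1. Qed.

Lemma dhomogM1 {j g f} : g \is 1.-homog -> f \is j.-homog -> g * f \is j.+1.-homog.
Proof. by move=> gh fh; have := dhomogM gh fh; rewrite add1n. Qed.

Lemma linform_homog (c : 'I_n -> k) : linform c \is 1.-homog.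
Proof. by apply: rpred_sum => i _; apply/rpredZ/dhomogXU. Qed.

Lemma hcompMX (m : 'X_{1..n}) d q :
  hcomp (mdeg m + d) ('X_[m] * q) = 'X_[m] * hcomp d q.
Proof.
rewrite !hcompE [q]mpolyE mulr_sumr !raddf_sum /= mulr_sumr.
apply: eq_bigr => m' _; rewrite -scalerAr !linearZ /= -scalerAr -mpolyXD.
rewrite !pihomogX [X in X == _]/= mdegD eqn_add2l.
by case: (_ == d); rewrite ?mulr0 ?mpolyXD.
Qed.

Lemma hcompM_homog e d g q :
  g \is e.-homog -> hcomp (e + d) (g * q) = g * hcomp d q.
Proof.
move=> /dhomogP gh; rewrite [g]mpolyE !mulr_suml hcompE raddf_sum /=.
apply: eq_big_seq => m /gh <-; rewrite -!scalerAl linearZ /=.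
by rewrite -hcompE hcompMX.
Qed.

End HomogComponents.

Definition homog_quot_vanish {k : fieldType} {n : nat} (I : pred {mpoly k[n]})
    (L : {mpoly k[n]}) (e : nat) : Prop :=
  forall f : {mpoly k[n]}, f \is e.+1.-homog ->
    exists g q, [/\ g \in I, q \is e.-homog & f = g + L * q].

Section HomogQuotient.
Context {k : fieldType} {n : nat} {I : pred {mpoly k[n]}}.
Hypothesis hI : homog_ideal I.
Context {L : {mpoly k[n]}}.
Hypothesis L_homog : L \is 1.-homog.

Lemma homog_quot_vanishP {e} : quot_lin_vanish I L e.+1 -> homog_quot_vanish I L e.
Proof.
move=> vanish f fh; have [g [q [gI def_f]]] := vanish f fh.
exists (hcomp e.+1 g), (hcomp e q); split; [exact: ideal_hcomp | exact: pihomogP |].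
by rewrite -(hcompM_homog _ _ _ _ L_homog) !hcompE -pihomogD -def_f pihomog_dE.
Qed.

Lemma homog_quot_vanishS e : homog_quot_vanish I L e -> homog_quot_vanish I L e.+1.
Proof.
move=> vanish f fh; rewrite [f]mpolyE.
elim/big_rec: _ => [|m p _ [g [q [gI qh ->]]]].
  by exists 0, 0; rewrite mulr0 addr0; split=> //; [exact: ideal0 | exact: dhomog0].
have [m_supp|m_nsupp] := boolP (m \in msupp f); last first.
  by exists g, q; move: m_nsupp; rewrite -mcoeff_eq0 => /eqP ->; rewrite scale0r add0r.
have [i [m' [-> deg_m']]] := monomial_splitU _ _ (dhomogP _ _ _ fh m m_supp).
have m'h : ('X_[m'] : {mpoly k[n]}) \is e.+1.-homog by rewrite dhomogX /= deg_m'.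
have [g' [q' [g'I q'h def_m']]] := vanish _ m'h.
exists (f@_(U_(i) + m')%MM *: ('X_i * g') + g), (f@_(U_(i) + m')%MM *: ('X_i * q') + q).
split; first by apply/idealD/gI/idealZ/idealMl.
  by apply/rpredD/qh/rpredZ/dhomogM1/q'h/dhomogXU.
by rewrite mpolyXD def_m' mulrDr scalerDr mulrDr -scalerAr mulrCA addrACA.
Qed.

Lemma homog_quot_vanish_le {e e'} :
  (e <= e')%N -> homog_quot_vanish I L e -> homog_quot_vanish I L e'.
Proof.
move/subnK <-; elim: (e' - e)%N => [//|i IH] /IH.
by rewrite addSn; apply: homog_quot_vanishS.
Qed.

End HomogQuotient.

Section Coordinates.
Context {k : fieldType} {n : nat} {I : pred {mpoly k[n]}}.
Hypothesis hI : homog_ideal I.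
Context {h : nat -> nat}.
Hypothesis hh : forall i, hdim I i (h i).

(* A_j is modelled by row vectors of length h_j: coordinates, modulo I, in a
   basis of the degree-j forms supplied by hdim. *)
Definition hbasis j : (h j).-tuple {mpoly k[n]} :=
  sval (constructive_indefinite_description _ (proj1 (hh j))).

Lemma hbasis_homog j a : tnth (hbasis j) a \is j.-homog.
Proof. by rewrite /hbasis; case: constructive_indefinite_description => t []. Qed.

Lemma hbasis_indep j : indep_mod I (hbasis j).
Proof. by rewrite /hbasis; case: constructive_indefinite_description => t []. Qed.

Definition hcomb j (u : 'rV[k]_(h j)) : {mpoly k[n]} :=
  \sum_a u 0 a *: tnth (hbasis j) a.

Lemma hcomb_homog {j} u : hcomb j u \is j.-homog.
Proof. by apply: rpred_sum => a _; apply/rpredZ/hbasis_homog. Qed.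

Lemma hcomb0 j : hcomb j 0 = 0.
Proof. by rewrite /hcomb big1 // => a _; rewrite mxE scale0r. Qed.

Lemma hcombB j u v : hcomb j (u - v) = hcomb j u - hcomb j v.
Proof. by rewrite /hcomb -sumrB; apply: eq_bigr => a _; rewrite !mxE scalerBl. Qed.

Lemma hcomb_ideal_eq0 j u : hcomb j u \in I -> u = 0.
Proof. by move=> /hbasis_indep u_eq0; apply/rowP => a; rewrite mxE u_eq0. Qed.

Lemma hcomb_span j f : f \is j.-homog -> exists u, f - hcomb j u \in I.
Proof.
move=> fh; apply: NNPP => f_nspan.
have f_indep : indep_mod I [tuple of f :: hbasis j].
  apply: (indep_mod_cons hI) (hbasis_indep j) _ => c; apply/negP => cI.
  apply: f_nspan; exists (\row_a c a); rewrite /hcomb.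
  by under eq_bigr do rewrite mxE.
have fbasis_homog i : tnth [tuple of f :: hbasis j] i \is j.-homog.
  by case: (unliftP ord0 i) => [a ->|->]; rewrite ?tnthS ?hbasis_homog.
by have := proj2 (hh j) _ _ fbasis_homog f_indep; rewrite ltnn.
Qed.

Definition coord j f : 'rV[k]_(h j) :=
  epsilon (inhabits 0) (fun u => f - hcomb j u \in I).

Lemma coordP {j f} : f \is j.-homog -> f - hcomb j (coord j f) \in I.
Proof. by move=> /hcomb_span; apply: epsilon_spec. Qed.

Lemma coord_unique j f u : f \is j.-homog -> f - hcomb j u \in I -> coord j f = u.
Proof.
move=> fh fuI; apply/eqP; rewrite -subr_eq0; apply/eqP/hcomb_ideal_eq0.
have := idealB hI fuI (coordP fh).
by rewrite hcombB opprB addrC addrA subrK.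
Qed.

Lemma coord_hcomb j u : coord j (hcomb j u) = u.
Proof. by apply: coord_unique; rewrite ?hcomb_homog ?subrr ?ideal0. Qed.

Lemma coord_eq0 {j f} : f \is j.-homog -> (coord j f == 0) = (f \in I).
Proof.
move=> fh; apply/eqP/idP => [f0|fI].
  by have := coordP fh; rewrite f0 hcomb0 subr0.
by apply: coord_unique; rewrite ?hcomb0 ?subr0.
Qed.

Lemma coord_eq j f g : f \is j.-homog -> g \is j.-homog ->
  f - g \in I -> coord j f = coord j g.
Proof.
move=> fh gh fgI; apply: coord_unique => //.
by have := idealD hI fgI (coordP gh); rewrite addrA subrK.
Qed.

Definition multmx g j : 'M[k]_(h j, h j.+1) :=
  \matrix_(a, b) coord j.+1 (g * tnth (hbasis j) a) 0 b.

Lemma mul_multmx g j u : g \is 1.-homog ->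
  u *m multmx g j = coord j.+1 (g * hcomb j u).
Proof.
move=> gh; symmetry; apply: coord_unique; first exact/dhomogM1/hcomb_homog.
have -> : hcomb j.+1 (u *m multmx g j) =
    \sum_a u 0 a *: hcomb j.+1 (coord j.+1 (g * tnth (hbasis j) a)).
  rewrite /hcomb; under eq_bigr do rewrite mxE scaler_suml.
  rewrite exchange_big /=; apply: eq_bigr => a _.
  by rewrite scaler_sumr; apply: eq_bigr => b _; rewrite !mxE scalerA.
rewrite /hcomb mulr_sumr -sumrB; apply: (ideal_sum hI) => a _.
by rewrite -scalerAr -scalerBr; apply/(idealZ hI)/coordP/dhomogM1/hbasis_homog.
Qed.

Variable c : 'I_n -> k.
Local Notation L := (linform c).

Definition kerL j := kermx (multmx L j).
Definition kappa j := \rank (kerL j).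

Lemma sub_kerL j u : (u <= kerL j)%MS = (L * hcomb j u \in I).
Proof.
rewrite -(coord_eq0 (dhomogM1 (linform_homog c) (hcomb_homog u))).
by rewrite -mul_multmx ?linform_homog //; apply/sub_kermxP/eqP.
Qed.

Lemma hdiff_le_kappa j : (h j - h j.+1 <= kappa j)%N.
Proof. by rewrite /kappa mxrank_ker leq_sub2l ?rank_leq_col. Qed.

Lemma rank_multmx_L j : homog_quot_vanish I L j -> \rank (multmx L j) = h j.+1.
Proof.
move=> vanish; apply/eqP; rewrite eqn_leq rank_leq_col /=.
rewrite -{1}(mxrank1 k (h j.+1)); apply: mxrankS; apply/row_subP => b.
set v := row b 1%:M.
have [g [q [gI qh def_v]]] := vanish (hcomb j.+1 v) (hcomb_homog v).
suff -> : v = coord j q *m multmx L j by apply: submxMl.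
rewrite mul_multmx ?linform_homog // -[LHS]coord_hcomb.
apply: coord_eq; rewrite ?hcomb_homog ?dhomogM1 ?linform_homog ?hcomb_homog //.
by rewrite def_v -addrA -mulrBr; apply/(idealD hI gI)/(idealMl hI)/coordP.
Qed.

Lemma kappa_eq_hdiff j : homog_quot_vanish I L j ->
  kappa j = (h j - h j.+1)%N /\ (h j.+1 <= h j)%N.
Proof.
move=> /rank_multmx_L rankL; rewrite /kappa mxrank_ker rankL; split=> //.
by rewrite -rankL rank_leq_row.
Qed.

Lemma kerL_mulX {j m} {U : 'M_(m, h j)} i :
  (U <= kerL j)%MS -> (U *m multmx 'X_i j <= kerL j.+1)%MS.
Proof.
move=> UL; apply/row_subP => r; rewrite row_mul mul_multmx ?dhomogXU //.
have := row_sub r U; move/submx_trans/(_ UL); rewrite !sub_kerL.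
set u := row r U => Lu; have := coordP (dhomogM1 (dhomogXU i) (hcomb_homog u)).
set w := coord _ _ => w_def.
have -> : L * hcomb j.+1 w = 'X_i * (L * hcomb j u) - L * ('X_i * hcomb j u - hcomb j.+1 w).
  by rewrite mulrBr mulrCA opprB addrC subrK.
by apply: (idealB hI); apply: (idealMl hI).
Qed.

Context {s : nat}.
Hypothesis hlevel : level_socle I s.

Lemma socle_homog {j f} : f \is j.-homog -> j != s ->
  (forall i, 'X_i * f \in I) -> f \in I.
Proof. by move=> fh js /hlevel /(_ j js); rewrite hcompE pihomog_dE. Qed.

Lemma kappa_gt0S j : j != s -> (0 < kappa j)%N -> (0 < kappa j.+1)%N.
Proof.
move=> js; rewrite /kappa !lt0n !mxrank_eq0 => kerL_neq0.
set u := nz_row (kerL j); have uL : (u <= kerL j)%MS by apply: nz_row_sub.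
have u_nI : hcomb j u \notin I.
  by apply: contra kerL_neq0 => /hcomb_ideal_eq0 u0; rewrite -nz_row_eq0 -/u u0.
have : ~~ [forall i, 'X_i * hcomb j u \in I].
  by apply: contra u_nI => /forallP; apply: socle_homog (hcomb_homog u) js.
case/forallPn => i Xu_nI; apply: contra Xu_nI => /eqP kerL0.
have := kerL_mulX i uL; rewrite mul_multmx ?dhomogXU // kerL0 submx0.
by rewrite coord_eq0 // dhomogM1 ?dhomogXU ?hcomb_homog.
Qed.

Lemma rank_kerL_cap {j} (l : seq 'I_n) {U : 'M_(h j)} : (U <= kerL j)%MS ->
  (\rank U <= \rank (U :&: \bigcap_(i <- l) kermx (multmx 'X_i j))
              + size l * kappa j.+1)%N.
Proof.
elim: l U => [|i l IH] U UL; first by rewrite big_nil capmx1 addn0.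
rewrite big_cons capmxA /= mulSn.
set Ui := (U :&: _)%MS; move: (IH Ui (submx_trans (capmxSl _ _) UL)).
have := mxrank_mul_ker U (multmx 'X_i j); rewrite -/Ui.
have := mxrankS (kerL_mulX i UL); rewrite -/(kappa j.+1).
move: (\rank (Ui :&: _)) => r; lia.
Qed.

(* The head i0 of enum 'I_n is recovered from L u = 0 since c i0 != 0; taking
   behead rather than removing a chosen index also covers n = 0. *)
Lemma mulX_kerL_ideal j u : (forall i, c i != 0) -> (u <= kerL j)%MS ->
  (forall i, i \in behead (enum 'I_n) -> 'X_i * hcomb j u \in I) ->
  forall i, 'X_i * hcomb j u \in I.
Proof.
move=> c_neq0 uL; case def_enum: (enum 'I_n) => [|i0 l] /= uX i.
  by have := mem_enum 'I_n i; rewrite def_enum.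
have uX' i' : i' != i0 -> 'X_i' * hcomb j u \in I.
  by move=> i'0; apply: uX; have := mem_enum 'I_n i'; rewrite def_enum inE (negPf i'0).
case: (eqVneq i i0) => [->|/uX' //].
move: uL; rewrite sub_kerL /linform mulr_suml (bigD1 i0) //= => Lu.
have rest : \sum_(i' | i' != i0) c i' *: 'X_i' * hcomb j u \in I.
  by apply: (ideal_sum hI) => i' /uX' Xu; rewrite -scalerAl; apply: (idealZ hI).
have := idealB hI Lu rest; rewrite addrK -scalerAl => /(idealZ hI (a := (c i0)^-1)).
by rewrite scalerA mulVf ?scale1r.
Qed.

Lemma kappa_le_mul j : (forall i, c i != 0) -> j != s ->
  (kappa j <= n.-1 * kappa j.+1)%N.
Proof.
move=> c_neq0 js; have := rank_kerL_cap (behead (enum 'I_n)) (submx_refl (kerL j)).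
rewrite size_behead size_enum_ord; set V := (_ :&: _)%MS.
suff -> : \rank V = 0%N by [].
apply/eqP; rewrite mxrank_eq0 -submx0; apply/row_subP => r.
have := row_sub r V; rewrite sub_capmx => /andP [uL ucap].
suff /hcomb_ideal_eq0 -> : hcomb j (row r V) \in I by rewrite sub0mx.
apply: socle_homog (hcomb_homog _) js _; apply: mulX_kerL_ideal uL _ => // i il.
rewrite -(coord_eq0 (dhomogM1 (dhomogXU i) (hcomb_homog _))) -mul_multmx ?dhomogXU //.
apply/eqP/sub_kermxP; elim: (behead _) ucap il => [//|i0 l IH].
by rewrite big_cons sub_capmx inE => /andP [ui0 /IH ul'] /predU1P [-> //|/ul'].
Qed.

Lemma kappa_gt0_le a t : (a <= t <= s)%N -> (0 < kappa a)%N -> (0 < kappa t)%N.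
Proof.
move=> /andP [+ +] ka; elim: t => [|t IH]; first by case: a ka.
rewrite leq_eqVlt => /predU1P [<- //|]; rewrite ltnS => a_t ts.
by apply: kappa_gt0S; [rewrite neq_ltn ts | apply: IH a_t (ltnW ts)].
Qed.

Lemma hS_lt_h j : homog_quot_vanish I L j -> (0 < kappa j)%N -> (h j.+1 < h j)%N.
Proof. by case/kappa_eq_hdiff => ->; rewrite subn_gt0. Qed.

Lemma hdiff_le_mul_hdiffS j : (forall i, c i != 0) -> j != s -> (0 < kappa j)%N ->
    homog_quot_vanish I L j.+1 ->
  (h j)%:Z - (h j.+1)%:Z <= (n%:Z - 1) * ((h j.+1)%:Z - (h j.+2)%:Z).
Proof.
move=> c_neq0 js kpos /kappa_eq_hdiff [kS hS].
have := hdiff_le_kappa j; have := kappa_le_mul j c_neq0 js; rewrite kS.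
have [n0|n_gt0] := posnP n.
  have n1 : n.-1 = 0%N by rewrite n0.
  by rewrite n1 mul0n; lia.
have -> : n%:Z - 1 = (n.-1)%:Z by lia.
have -> : (h j.+1)%:Z - (h j.+2)%:Z = (h j.+1 - h j.+2)%N by lia.
by rewrite -PoszM; move: (n.-1 * _)%N => m; lia.
Qed.

End Coordinates.

Lemma expn_digits_inj {D N} {a b : 'I_N -> nat} :
  (forall i, a i < D)%N -> (forall i, b i < D)%N ->
  (\sum_(i < N) D ^ i * a i = \sum_(i < N) D ^ i * b i)%N -> a =1 b.
Proof.
elim: N a b => [|N IH] a b a_lt b_lt; first by move=> _ [].
have D_gt0 : (0 < D)%N by apply: leq_ltn_trans (a_lt ord0).
have expand (x : 'I_N.+1 -> nat) :
    (\sum_(i < N.+1) D ^ i * x i = x ord0 + D * \sum_(i < N) D ^ i * x (lift ord0 i))%N.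
  rewrite big_ord_recl mul1n big_distrr /=; congr (_ + _).
  by apply: eq_bigr => i _; rewrite expnS mulnA.
rewrite !expand => eq_ab.
have eq0 : a ord0 = b ord0.
  by have := congr1 (modn^~ D) eq_ab; rewrite !(addnC (_ ord0)) !(mulnC D) !modnMDl !modn_small.
have /IH eq_lift : (\sum_(i < N) D ^ i * a (lift ord0 i) =
                    \sum_(i < N) D ^ i * b (lift ord0 i))%N.
  have := congr1 (divn^~ D) eq_ab.
  by rewrite !(addnC (_ ord0)) !(mulnC D) !divnMDl // !divn_small // !addn0.
by move=> i; case: (unliftP ord0 i) => [j ->|->]; rewrite ?eq_lift.
Qed.

Section GeneralPoint.
Context {k : fieldType}.
Hypothesis k_infinite : forall s : seq k, exists x : k, x \notin s.

Lemma poly_nonroot {q : {poly k}} : q != 0 -> exists t, ~~ root q t.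
Proof.
move=> q_neq0; have [r [r_uniq r_size]] : exists r : seq k, uniq r /\ size r = size q.
  elim: (size q) => [|m [r [r_uniq r_size]]]; first by exists [::].
  by have [x x_r] := k_infinite r; exists (x :: r); rewrite /= x_r r_uniq r_size.
have /allPn [t _ qt] : ~~ all (root q) r.
  by apply/negP => /(max_poly_roots q_neq0)/(_ r_uniq); rewrite r_size ltnn.
by exists t.
Qed.

(* Kronecker substitution x_i := t ^ D ^ i with D > every exponent in p sends
   distinct monomials of p to distinct powers of t. *)
Lemma exists_general_point {n} {p : {mpoly k[n]}} : p != 0 ->
  exists c : 'I_n -> k, p.@[c] != 0 /\ forall i, c i != 0.
Proof.
move=> p_neq0; set D := msize p.
pose enc (m : 'X_{1..n}) := (\sum_(i < n) D ^ i * m i)%N.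
pose q : {poly k} := \sum_(m <- msupp p) p@_m *: 'X^(enc m).
have q_eval t : q.[t] = p.@[fun i => t ^+ (D ^ i)].
  rewrite mevalE /q horner_sum; apply: eq_bigr => m _.
  rewrite hornerZ hornerXn -prodrXr; congr (_ * _).
  by apply: eq_bigr => i _; rewrite exprM.
have supp_lt m i : m \in msupp p -> (m i < D)%N.
  move=> /msize_mdeg_lt; apply: leq_ltn_trans.
  by rewrite mdegE (bigD1 i) //= leq_addr.
have q_neq0 : q != 0.
  have m0_supp := mlead_supp p_neq0; set m0 := mlead p in m0_supp.
  apply/eqP => /(congr1 (fun r : {poly k} => r`_(enc m0))).
  rewrite coef0 /q coef_sum (bigD1_seq m0) ?msupp_uniq //= coefZ coefXn eqxx mulr1.
  rewrite big1_seq ?addr0 => [|m /andP [m_neq m_supp]].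
    by apply/eqP; rewrite -mcoeff_msupp.
  rewrite coefZ coefXn; case: eqP => [enc_eq|]; last by rewrite mulr0.
  suff eq_m : m0 = m by rewrite eq_m eqxx in m_neq.
  by apply/mnmP/(expn_digits_inj (supp_lt m0 ^~ m0_supp) (supp_lt m ^~ m_supp)).
have [t] := poly_nonroot (mulf_neq0 q_neq0 (negbT (polyX_eq0 k))).
rewrite /root hornerM hornerX mulf_eq0 negb_or q_eval => /andP [pt_neq0 t_neq0].
by exists (fun i => t ^+ (D ^ i)); split=> // i; rewrite expf_neq0.
Qed.

End GeneralPoint.

Theorem proposition3p4 (k : fieldType) (n : nat)
  (k_char0 : [pchar k] =i pred0)
  (k_infinite : forall s : seq k, exists x : k, x \notin s)
  (I : pred {mpoly k[n]}) (hI : homog_ideal I)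
  (h : nat -> nat) (hh : forall i, hdim I i (h i))
  (s : nat) (hs_pos : (0 < h s)%N) (hs_top : forall i, (s < i)%N -> h i = 0%N)
  (hlevel : level_socle I s)
  (r1 : nat) (hr1 : is_r1 I r1)
  (d : nat) (hd : (r1 <= d)%N) (hdrop : (h d < h d.-1)%N) :
  ((forall t, (d.-1 <= t < s)%N -> (h t.+1 < h t)%N) /\ (0 < h s)%N) /\
  (forall t, (d <= t <= s)%N ->
     (h t.-1)%:Z - (h t)%:Z <= (n%:Z - 1) * ((h t)%:Z - (h t.+1)%:Z)).
Proof.
have d_gt0 : (0 < d)%N by case: d hdrop {hd} => //=; rewrite ltnn.
have [P [P_neq0 P_general]] := hr1.
have [c [Pc_neq0 c_neq0]] := exists_general_point k_infinite P_neq0.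
have vanish_r1 := homog_quot_vanishP hI (linform_homog c) (proj1 (P_general c Pc_neq0)).
have vanish t : (d <= t)%N -> homog_quot_vanish I (linform c) t.
  by move=> dt; apply: (homog_quot_vanish_le hI (leq_trans hd dt) vanish_r1).
have kappa_pos t : (d.-1 <= t <= s)%N -> (0 < kappa hh c t)%N.
  move/(kappa_gt0_le hI hh c hlevel); apply; apply: leq_trans (hdiff_le_kappa hh c _).
  by rewrite prednK // subn_gt0.
split; first split=> // t /andP [dt ts].
  have [->|t_neq] := eqVneq t d.-1; first by rewrite prednK.
  apply: (hS_lt_h hI); first by apply: vanish; rewrite -(prednK d_gt0) ltn_neqAle eq_sym t_neq.
  by apply: kappa_pos; rewrite dt ltnW.
move=> t /andP [dt ts]; have t_gt0 := leq_trans d_gt0 dt; rewrite -(prednK t_gt0).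
apply: (hdiff_le_mul_hdiffS hI hh c hlevel) c_neq0 _ _ _; first by rewrite neq_ltn; lia.
  by apply: kappa_pos; apply/andP; split; lia.
by apply: vanish; rewrite !prednK.
Qed.
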